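(* There exists a computable partial function $U$ (from pairs of binary strings to binary strings) such that $\mathrm{KS}_U$ is minimal up to an additive constant, i.e. for every computable partial function $V$ of two string arguments there is a constant $c$ with $\mathrm{KS}_U(y\mid x)\le \mathrm{KS}_V(y\mid x)+c$ for all strings $x,y$, and nevertheless $E_U(x,y)=\infty$ for some binary strings $x,y$ (so $E_U$ is not minimal up to an additive constant among the functions $E_V$).
   Context: For a computable partial function $U(p,x)$ of two binary-string arguments with binary-string values, $\mathrm{KS}_U(y\mid x)=\min\{|p|: U(p,x)=y\}$ and $E_U(x,y)=\min\{|p| : U(p,x)=y \text{ and } U(p,y)=x\}$, where $|p|$ is the length of $p$ and $\min\emptyset=\infty$. *)

From mathcomp Require Import all_boot.
From mathcomp Require Import boolp.

Set Implicit Arguments.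
Unset Strict Implicit.
Unset Printing Implicit Defensive.

(* Programs; arity is implicit (the argument list). *)
Inductive prf : Type :=
| PZero : prf
| PSucc : prf
| PProj : nat -> prf
| PComp : prf -> list prf -> prf
| PPrim : prf -> prf -> prf
| PMu   : prf -> prf.

Inductive eval : prf -> seq nat -> nat -> Prop :=
| ev_zero args : eval PZero args 0
| ev_succ x args : eval PSucc (x :: args) x.+1
| ev_proj i args : eval (PProj i) args (nth 0 args i)
| ev_comp f gs args ys y :
    evals gs args ys -> eval f ys y -> eval (PComp f gs) args y
| ev_prim0 f g xs y : eval f xs y -> eval (PPrim f g) (0 :: xs) y
| ev_primS f g n xs r y :
    eval (PPrim f g) (n :: xs) r -> eval g (n :: r :: xs) y ->
    eval (PPrim f g) (n.+1 :: xs) y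
| ev_mu f xs n :
    eval f (n :: xs) 0 ->
    (forall m, m < n -> exists k, eval f (m :: xs) k.+1) ->
    eval (PMu f) xs n
with evals : list prf -> seq nat -> seq nat -> Prop :=
| evs_nil args : evals nil args [::]
| evs_cons g gs args y ys :
    eval g args y -> evals gs args ys -> evals (cons g gs) args (y :: ys).

Notation bstr := (seq bool).

(* Standard bijection {0,1}^* -> nat:  [] |-> 0, b :: s |-> 2 * code s + 1 + b. *)
Fixpoint code (s : bstr) : nat :=
  match s with
  | [::] => 0
  | b :: s' => (code s').*2 + 1 + b
  end.

(* A computable partial function of two string arguments with string values is
   given by a program [U]; [app2 U p x y] means  U(p, x) = y  (defined). *)
Definition app2 (U : prf) (p x y : bstr) : Prop :=
  eval U [:: code p; code x] (code y).

(* ---------- Extended naturals (None = infinity) ---------- *)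
Definition natinf := option nat.
Definition leinf (a b : natinf) : Prop :=
  match a, b with
  | _, None => True
  | None, Some _ => False
  | Some m, Some n => m <= n
  end.
Definition addinf (a : natinf) (c : nat) : natinf :=
  match a with Some n => Some (n + c) | None => None end.

Definition min_len (P : bstr -> Prop) : natinf :=
  match pselect (exists n, exists p, size p = n /\ P p) with
  | left H => Some (ex_minn (P := fun n => `[< exists p, size p = n /\ P p >])
                      (let: ex_intro n Hn := H in ex_intro _ n (asboolT Hn)))
  | right _ => None
  end.

Definition KS (U : prf) (y x : bstr) : natinf :=
  min_len (fun p => app2 U p x y).

Definition E (U : prf) (x y : bstr) : natinf :=
  min_len (fun p => app2 U p x y /\ app2 U p y x).

From mathcomp Require Import all_boot zify boolp.

(* A program is coded by a number, and a universal program runs the code [c] of [V] on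
   arguments [a] by iterating a primitive recursive step function of a stack machine until
   the first final state; so [universal (c, a) = V a] whenever [V a] is defined.
   The optimal [U] reads its program as [b 1^c 0 p] and runs the program coded [c] on
   [(p, x)], but only when the flag bit [b] equals [x == [:: true]]. The prefix [b 1^c 0]
   costs [c + 2] bits, so [KS_U] is optimal up to that constant; but a program [p] with
   [U(p, [::]) = [:: true]] and [U(p, [:: true]) = [::]] would need both flag values,
   hence [E_U([::], [:: true])] is infinite. *)

Set Implicit Arguments.
Unset Strict Implicit.
Unset Printing Implicit Defensive.

Local Notation "a .[ i ]" := (nth 0 a i).

Lemma min_len_witness (P : bstr -> Prop) k : min_len P = Some k -> exists2 p, size p = k & P p.
Proof.
rewrite /min_len; case: pselect => // ex_P [<-].
by case: ex_minnP => m /asboolP [p [size_p Pp]] _; exists p.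
Qed.

Lemma min_len_le (P : bstr -> Prop) p : P p -> exists2 k, min_len P = Some k & k <= size p.
Proof.
move=> Pp; rewrite /min_len; case: pselect => [ex_P | []]; last by exists (size p), p.
by eexists; first reflexivity; case: ex_minnP => m _; apply; apply/asboolP; exists p.
Qed.

Lemma min_len_none (P : bstr -> Prop) : (forall p, ~ P p) -> min_len P = None.
Proof.
move=> notP; rewrite /min_len; case: pselect => // ex_P; exfalso.
by case: ex_P => n [p [_ /notP]].
Qed.

Lemma min_len_translate (P Q : bstr -> Prop) (f : bstr -> bstr) c :
  (forall p, P p -> Q (f p)) -> (forall p, size (f p) <= size p + c) ->
  leinf (min_len Q) (addinf (min_len P) c).
Proof.
move=> PQ size_f; case E: (min_len P) => [k|] /=; last by case: (min_len Q).
have [p <- /PQ /min_len_le [k' -> le_k']] := min_len_witness E.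
exact: leq_trans le_k' (size_f p).
Qed.

Lemma eval_comp_inv f gs a y :
  eval (PComp f gs) a y -> exists2 ys, evals gs a ys & eval f ys y.
Proof. by move=> H; inversion H; exists ys. Qed.

Lemma eval_prim0_inv f g xs y : eval (PPrim f g) (0 :: xs) y -> eval f xs y.
Proof. by move=> H; inversion H. Qed.

Lemma eval_primS_inv f g n xs y : eval (PPrim f g) (n.+1 :: xs) y ->
  exists2 r, eval (PPrim f g) (n :: xs) r & eval g (n :: r :: xs) y.
Proof. by move=> H; inversion H; exists r. Qed.

Lemma eval_mu_inv f xs n : eval (PMu f) xs n ->
  eval f (n :: xs) 0 /\ forall m, m < n -> exists k, eval f (m :: xs) k.+1.
Proof. by move=> H; inversion H. Qed.

Lemma evals_cons_inv g gs a ys : evals (g :: gs) a ys ->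
  exists y ys', [/\ ys = y :: ys', eval g a y & evals gs a ys'].
Proof. by move=> H; inversion H; exists y, ys0. Qed.

Lemma eval_functional f a y : eval f a y -> forall y', eval f a y' -> y = y'
with evals_functional gs a ys : evals gs a ys -> forall ys', evals gs a ys' -> ys = ys'.
Proof.
- case=> {f a y} [a|x a|i a|f gs a ys y Hgs Hf|f g xs y Hf|f g n xs r y Hr Hg|f xs n Hn Hlt]
    y' H; try by inversion H.
  + case/eval_comp_inv: H => ys' /(evals_functional _ _ _ Hgs) <-.
    exact (eval_functional _ _ _ Hf y').
  + exact (eval_functional _ _ _ Hf _ (eval_prim0_inv H)).
  + case/eval_primS_inv: H => r' /(eval_functional _ _ _ Hr) <-.
    exact (eval_functional _ _ _ Hg y').
  + case/eval_mu_inv: H => Hn' Hlt'.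
    case: (ltngtP n y') => // [lt_ny | lt_yn].
    * by case: (Hlt' _ lt_ny) => k /(eval_functional _ _ _ Hn).
    * by case: (Hlt _ lt_yn) => k /(eval_functional _ _ _) /(_ _ Hn').
- case=> {gs a ys} [a|g gs a y ys Hg Hgs] ys' H; first by inversion H.
  case/evals_cons_inv: H => y' [ys''] [->].
  by move=> /(eval_functional _ _ _ Hg) <- /(evals_functional _ _ _ Hgs) <-.
Qed.

(** * Total recursive functions *)

Record recfun := RecFun {
  rfun :> seq nat -> nat;
  rprog : prf;
  rprogP : forall a, eval rprog a (rfun a)
}.

Lemma evals_map (gs : seq recfun) a : evals (map rprog gs) a [seq g a | g : recfun <- gs].
Proof. by elim: gs => [|g gs IH] /=; constructor=> //; apply: rprogP. Qed.

Lemma eval_comp_map (h : recfun) gs a :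
  eval (PComp (rprog h) (map rprog gs)) a (h [seq g a | g : recfun <- gs]).
Proof. by apply: ev_comp (evals_map gs a) (rprogP h _). Qed.

Definition compR h gs := RecFun (eval_comp_map h gs).
Local Notation "h $ gs" := (compR h gs) (at level 60, right associativity).

Fixpoint primrec (b s : seq nat -> nat) k xs :=
  if k is k'.+1 then s [:: k', primrec b s k' xs & xs] else b xs.

Lemma eval_prim (b s : recfun) k xs :
  eval (PPrim (rprog b) (rprog s)) (k :: xs) (primrec b s k xs).
Proof.
elim: k => [|k IH]; first exact/ev_prim0/rprogP.
exact: ev_primS IH (rprogP s _).
Qed.

Lemma eval_prim_map (b s n : recfun) xs a :
  eval (PComp (PPrim (rprog b) (rprog s)) (rprog n :: map rprog xs)) a
       (primrec b s (n a) [seq g a | g : recfun <- xs]).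
Proof. by apply: ev_comp (eval_prim _ _ _ _); constructor; [apply: rprogP | apply: evals_map]. Qed.

Definition primR b s n xs := RecFun (eval_prim_map b s n xs).

Lemma eval_ext (r : recfun) F : r =1 F -> forall a, eval (rprog r) a (F a).
Proof. by move=> rF a; rewrite -rF; apply: rprogP. Qed.

Definition extR (r : recfun) F (rF : r =1 F) := RecFun (eval_ext rF).

Definition zeroR := RecFun ev_zero.
Definition projR i := RecFun (ev_proj i).
Local Notation "''a_' i" := (projR i) (at level 8, i at level 2, format "''a_' i").

Lemma eval_succ_head a : eval (PComp PSucc [:: PProj 0]) a a.[0].+1.
Proof. by apply: ev_comp (ev_succ _ _); do !constructor. Qed.

Definition succR := RecFun eval_succ_head.

Fixpoint constR n := if n is n'.+1 then succR $ [:: constR n'] else zeroR.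

Lemma iterR_subproof (f : recfun) :
  primR 'a_0 (f $ [:: 'a_1]) 'a_0 [:: 'a_1] =1 fun a => iter a.[0] (fun n => f [:: n]) a.[1].
Proof. by move=> a /=; elim: a.[0] => //= k ->. Qed.

Definition iterR f := extR (iterR_subproof f).

Definition addR :=
  @extR (iterR succR $ [:: 'a_1; 'a_0]) (fun a => a.[0] + a.[1]) (fun a => iter_succn _ _).

Lemma predR_subproof : primR zeroR 'a_0 'a_0 [::] =1 fun a => a.[0].-1.
Proof. by move=> a /=; case: a.[0]. Qed.

Definition predR := extR predR_subproof.

Definition subR :=
  @extR (iterR predR $ [:: 'a_1; 'a_0]) (fun a => a.[0] - a.[1]) (fun a => iter_predn _ _).

Lemma ifzR_subproof :
  primR 'a_0 'a_3 'a_0 [:: 'a_1; 'a_2] =1 fun a => if a.[0] == 0 then a.[1] else a.[2].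
Proof. by move=> a /=; case: a.[0]. Qed.

Definition ifzR := extR ifzR_subproof.

Lemma ifeqR_subproof :
  ifzR $ [:: addR $ [:: subR $ [:: 'a_0; 'a_1]; subR $ [:: 'a_1; 'a_0]]; 'a_2; 'a_3]
  =1 fun a => if a.[0] == a.[1] then a.[2] else a.[3].
Proof.
move=> a /=; congr (if _ then _ else _).
by rewrite addn_eq0 !subn_eq0 eqn_leq.
Qed.

Definition ifeqR := extR ifeqR_subproof.

Lemma oddR_subproof :
  primR zeroR (subR $ [:: constR 1; 'a_1]) 'a_0 [::] =1 fun a => odd a.[0].
Proof. by move=> a /=; elim: a.[0] => //= k ->; case: (odd k). Qed.

Definition oddR := extR oddR_subproof.

Lemma halfR_subproof :
  primR zeroR (addR $ [:: 'a_1; oddR $ [:: 'a_0]]) 'a_0 [::] =1 fun a => a.[0]./2.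
Proof. by move=> a /=; elim: a.[0] => //= k ->; rewrite uphalf_half addnC. Qed.

Definition halfR := extR halfR_subproof.

(** * Pairing and coded sequences *)

Fixpoint tri k := if k is k'.+1 then tri k' + k else 0.

Lemma triR_subproof :
  primR zeroR (addR $ [:: 'a_1; succR $ [:: 'a_0]]) 'a_0 [::] =1 fun a => tri a.[0].
Proof. by move=> a /=; elim: a.[0] => //= k ->. Qed.

Definition triR := extR triR_subproof.

Lemma leq_tri m n : m <= n -> tri m <= tri n.
Proof. by move/subnK <-; elim: (n - m) => //= k; lia. Qed.

Fixpoint tri_root n :=
  if n is n'.+1 then
    let d := tri_root n' in if tri d.+1 <= n then d.+1 else d
  else 0.

Lemma tri_rootR_subproof :
  primR zeroR (ifzR $ [:: subR $ [:: triR $ [:: succR $ [:: 'a_1]]; succR $ [:: 'a_0]];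
                          succR $ [:: 'a_1]; 'a_1]) 'a_0 [::]
  =1 fun a => tri_root a.[0].
Proof. by move=> a /=; elim: a.[0] => //= k ->; rewrite subn_eq0. Qed.

Definition tri_rootR := extR tri_rootR_subproof.

Lemma tri_rootP n : tri (tri_root n) <= n < tri (tri_root n).+1.
Proof. by elim: n => //= n; case: ifP => /=; lia. Qed.

Lemma tri_root_unique d n : tri d <= n < tri d.+1 -> tri_root n = d.
Proof.
move=> bound_d; have := tri_rootP n.
by case: (ltngtP (tri_root n) d) => // /leq_tri; lia.
Qed.

Definition pairn x y := tri (x + y) + y.
Definition sndn n := n - tri (tri_root n).
Definition fstn n := tri_root n - sndn n.

Lemma tri_root_pair x y : tri_root (pairn x y) = x + y.
Proof. by apply: tri_root_unique; rewrite /pairn /=; lia. Qed.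

Lemma sndn_pair x y : sndn (pairn x y) = y.
Proof. by rewrite /sndn tri_root_pair /pairn; lia. Qed.

Lemma fstn_pair x y : fstn (pairn x y) = x.
Proof. by rewrite /fstn sndn_pair tri_root_pair; lia. Qed.

Definition pairR :=
  @extR (addR $ [:: triR $ [:: addR $ [:: 'a_0; 'a_1]]; 'a_1]) (fun a => pairn a.[0] a.[1])
        (fun=> erefl).
Definition sndnR :=
  @extR (subR $ [:: 'a_0; triR $ [:: tri_rootR $ [:: 'a_0]]]) (fun a => sndn a.[0]) (fun=> erefl).
Definition fstnR :=
  @extR (subR $ [:: tri_rootR $ [:: 'a_0]; sndnR $ [:: 'a_0]]) (fun a => fstn a.[0]) (fun=> erefl).

Definition lcons x l := (pairn x l).+1.
Definition lhd n := fstn n.-1.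
Definition ltl n := sndn n.-1.
Definition lnth l i := lhd (iter i ltl l).
Definition enc_seq := foldr lcons 0.

Arguments pairn : simpl never.
Arguments fstn : simpl never.
Arguments sndn : simpl never.
Arguments lcons : simpl never.
Arguments lhd : simpl never.
Arguments ltl : simpl never.
Arguments lnth : simpl never.

Lemma lhd_cons x l : lhd (lcons x l) = x.
Proof. exact: fstn_pair. Qed.

Lemma ltl_cons x l : ltl (lcons x l) = l.
Proof. exact: sndn_pair. Qed.

Lemma lcons_eq0 x l : (lcons x l == 0) = false.
Proof. by []. Qed.

Lemma lnth_enc l i : lnth (enc_seq l) i = l.[i].
Proof.
have iter_ltl0 j : iter j ltl 0 = 0 by elim: j => //= j ->.
rewrite /lnth; elim: i l => [|i IH] [|x l] //=; rewrite ?lhd_cons ?iter_ltl0 //.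
by rewrite -iterS iterSr ltl_cons IH.
Qed.

Definition lconsR :=
  @extR (succR $ [:: pairR $ [:: 'a_0; 'a_1]]) (fun a => lcons a.[0] a.[1]) (fun=> erefl).
Definition lhdR := @extR (fstnR $ [:: predR $ [:: 'a_0]]) (fun a => lhd a.[0]) (fun=> erefl).
Definition ltlR := @extR (sndnR $ [:: predR $ [:: 'a_0]]) (fun a => ltl a.[0]) (fun=> erefl).
Definition lnthR :=
  @extR (lhdR $ [:: iterR ltlR $ [:: 'a_1; 'a_0]]) (fun a => lnth a.[0] a.[1]) (fun=> erefl).

Definition ctail n := n.-1./2.

Arguments ctail : simpl never.

Definition ctailR := @extR (halfR $ [:: predR $ [:: 'a_0]]) (fun a => ctail a.[0]) (fun=> erefl).

Lemma ctail_code s : ctail (code s) = code (behead s).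
Proof. by case: s => //= b s; rewrite /ctail addn1 /= addnC half_bit_double. Qed.

Lemma iter_ctail_code k s : iter k ctail (code s) = code (drop k s).
Proof.
elim: k s => [|k IH] s; first by rewrite drop0.
by rewrite iterSr ctail_code IH; case: s.
Qed.

Lemma odd_code s : odd (code s) = ~~ head true s.
Proof. by case: s => //= b s; rewrite addn1 /= oddD odd_double; case: b. Qed.

Lemma code_eq2 s : (code s == 2) = (s == [:: true]).
Proof.
apply/eqP/eqP=> [|-> //]; case: s => [|[] [|b s]] //=.
all: by rewrite -!addnn; lia.
Qed.

(** * A universal program *)

(* The argument programs of a composition are stored in reverse order, so that the
   machine below, which conses each result onto an accumulator, collects them in order. *)
Fixpoint prf_code (f : prf) : nat :=
  match f with
  | PZero => pairn 0 0
  | PSucc => pairn 1 0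
  | PProj i => pairn 2 i
  | PComp h gs => pairn 3 (pairn (prf_code h) (enc_seq (rev (map prf_code gs))))
  | PPrim b s => pairn 4 (pairn (prf_code b) (prf_code s))
  | PMu h => pairn 5 (prf_code h)
  end.

(* A small-step machine with an explicit stack. A state is either [st_eval c a K]
   (run the program coded [c] on the coded argument list [a]) or [st_ret y K] (return [y]),
   where [K] is the coded list of pending frames; [st_ret y 0] is final. A frame tells what
   to do with a returned value [y]: [fr_comp c gs a acc] evaluates the remaining argument
   programs [gs] on [a] and then [c] on [y :: acc]; [fr_prim c k xs] runs the step program
   [c] on [k :: y :: xs]; [fr_mu c xs n] returns [n] if [y = 0] and otherwise tries [n.+1]. *)
Definition st_eval c a K := pairn 0 (pairn c (pairn a K)).
Definition st_ret y K := pairn 1 (pairn y K).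
Definition fr_comp c gs a acc := pairn 0 (pairn c (pairn gs (pairn a acc))).
Definition fr_prim c k xs := pairn 1 (pairn c (pairn k xs)).
Definition fr_mu c xs n := pairn 2 (pairn c (pairn xs n)).

Arguments st_eval : simpl never.
Arguments st_ret : simpl never.

Definition comp_next c gs a acc K :=
  if gs == 0 then st_eval c acc K
  else st_eval (lhd gs) a (lcons (fr_comp c (ltl gs) a acc) K).

Definition step s :=
  if fstn s == 0 then
    let c := fstn (sndn s) in let a := fstn (sndn (sndn s)) in
    let K := sndn (sndn (sndn s)) in let tag := fstn c in let d := sndn c in
    if tag == 0 then st_ret 0 K
    else if tag == 1 then st_ret (lhd a).+1 K
    else if tag == 2 then st_ret (lnth a d) K
    else if tag == 3 then comp_next (fstn d) (sndn d) a 0 K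
    else if tag == 4 then
      if lhd a == 0 then st_eval (fstn d) (ltl a) K
      else st_eval c (lcons (lhd a).-1 (ltl a)) (lcons (fr_prim (sndn d) (lhd a).-1 (ltl a)) K)
    else st_eval d (lcons 0 a) (lcons (fr_mu d a 0) K)
  else
    let y := fstn (sndn s) in let K := sndn (sndn s) in
    if K == 0 then s else
    let tag := fstn (lhd K) in let d := sndn (lhd K) in let K' := ltl K in
    if tag == 0 then
      comp_next (fstn d) (fstn (sndn d)) (fstn (sndn (sndn d))) (lcons y (sndn (sndn (sndn d)))) K'
    else if tag == 1 then st_eval (fstn d) (lcons (fstn (sndn d)) (lcons y (sndn (sndn d)))) K'
    else if y == 0 then st_ret (sndn (sndn d)) K'
    else st_eval (fstn d) (lcons (sndn (sndn d)).+1 (fstn (sndn d)))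
                 (lcons (fr_mu (fstn d) (fstn (sndn d)) (sndn (sndn d)).+1) K').

Arguments step : simpl never.

Local Notation fstR r := (fstnR $ [:: r]).
Local Notation sndR r := (sndnR $ [:: r]).
Local Notation ifz c x y := (ifzR $ [:: c; x; y]).
Local Notation ifeq c k x y := (ifeqR $ [:: c; constR k; x; y]).

Definition st_evalR :=
  @extR (pairR $ [:: zeroR; pairR $ [:: 'a_0; pairR $ [:: 'a_1; 'a_2]]])
        (fun a => st_eval a.[0] a.[1] a.[2]) (fun=> erefl).
Definition st_retR :=
  @extR (pairR $ [:: constR 1; pairR $ [:: 'a_0; 'a_1]]) (fun a => st_ret a.[0] a.[1])
        (fun=> erefl).
Definition fr_compR :=
  @extR (pairR $ [:: zeroR; pairR $ [:: 'a_0; pairR $ [:: 'a_1; pairR $ [:: 'a_2; 'a_3]]]])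
        (fun a => fr_comp a.[0] a.[1] a.[2] a.[3]) (fun=> erefl).
Definition fr_primR :=
  @extR (pairR $ [:: constR 1; pairR $ [:: 'a_0; pairR $ [:: 'a_1; 'a_2]]])
        (fun a => fr_prim a.[0] a.[1] a.[2]) (fun=> erefl).
Definition fr_muR :=
  @extR (pairR $ [:: constR 2; pairR $ [:: 'a_0; pairR $ [:: 'a_1; 'a_2]]])
        (fun a => fr_mu a.[0] a.[1] a.[2]) (fun=> erefl).
Definition comp_nextR :=
  @extR (ifz 'a_1 (st_evalR $ [:: 'a_0; 'a_3; 'a_4])
          (st_evalR $ [:: lhdR $ [:: 'a_1]; 'a_2;
                          lconsR $ [:: fr_compR $ [:: 'a_0; ltlR $ [:: 'a_1]; 'a_2; 'a_3]; 'a_4]]))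
        (fun a => comp_next a.[0] a.[1] a.[2] a.[3] a.[4]) (fun=> erefl).

Section StepR.

Local Notation e_code := (fstR (sndR 'a_0)).
Local Notation e_args := (fstR (sndR (sndR 'a_0))).
Local Notation e_cont := (sndR (sndR (sndR 'a_0))).
Local Notation e_tag := (fstR e_code).
Local Notation e_data := (sndR e_code).
Local Notation e_hd := (lhdR $ [:: e_args]).
Local Notation e_tl := (ltlR $ [:: e_args]).
Local Notation r_val := (fstR (sndR 'a_0)).
Local Notation r_cont := (sndR (sndR 'a_0)).
Local Notation r_tag := (fstR (lhdR $ [:: r_cont])).
Local Notation r_data := (sndR (lhdR $ [:: r_cont])).
Local Notation r_rest := (ltlR $ [:: r_cont]).

Definition stepR_body :=
  ifz (fstR 'a_0)
    (ifz e_tag (st_retR $ [:: zeroR; e_cont])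
    (ifeq e_tag 1 (st_retR $ [:: succR $ [:: e_hd]; e_cont])
    (ifeq e_tag 2 (st_retR $ [:: lnthR $ [:: e_args; e_data]; e_cont])
    (ifeq e_tag 3 (comp_nextR $ [:: fstR e_data; sndR e_data; e_args; zeroR; e_cont])
    (ifeq e_tag 4
       (ifz e_hd (st_evalR $ [:: fstR e_data; e_tl; e_cont])
          (st_evalR $ [:: e_code; lconsR $ [:: predR $ [:: e_hd]; e_tl];
                lconsR $ [:: fr_primR $ [:: sndR e_data; predR $ [:: e_hd]; e_tl]; e_cont]]))
    (st_evalR $ [:: e_data; lconsR $ [:: zeroR; e_args];
                    lconsR $ [:: fr_muR $ [:: e_data; e_args; zeroR]; e_cont]]))))))
    (ifz r_cont 'a_0
    (ifz r_tag
       (comp_nextR $ [:: fstR r_data; fstR (sndR r_data); fstR (sndR (sndR r_data));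
                         lconsR $ [:: r_val; sndR (sndR (sndR r_data))]; r_rest])
    (ifeq r_tag 1
       (st_evalR $ [:: fstR r_data;
                       lconsR $ [:: fstR (sndR r_data); lconsR $ [:: r_val; sndR (sndR r_data)]];
                       r_rest])
    (ifz r_val (st_retR $ [:: sndR (sndR r_data); r_rest])
       (st_evalR $ [:: fstR r_data;
                       lconsR $ [:: succR $ [:: sndR (sndR r_data)]; fstR (sndR r_data)];
                       lconsR $ [:: fr_muR $ [:: fstR r_data; fstR (sndR r_data);
                                                 succR $ [:: sndR (sndR r_data)]]; r_rest]]))))).

End StepR.

Definition stepR := @extR stepR_body (fun a => step a.[0]) (fun=> erefl).

Ltac simpl_pairs :=
  repeat first [rewrite fstn_pair | rewrite sndn_pair | rewrite lhd_cons | rewrite ltl_cons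
               | rewrite lcons_eq0].

Ltac simpl_step :=
  rewrite /step /st_eval /st_ret /fr_comp /fr_prim /fr_mu ?[prf_code _]/= ?[enc_seq _]/=;
  cbv zeta; simpl_pairs; rewrite /=.

Lemma step_zero A K : step (st_eval (prf_code PZero) A K) = st_ret 0 K.
Proof. by simpl_step. Qed.

Lemma step_succ x a K : step (st_eval (prf_code PSucc) (enc_seq (x :: a)) K) = st_ret x.+1 K.
Proof. by simpl_step. Qed.

Lemma step_proj i a K : step (st_eval (prf_code (PProj i)) (enc_seq a) K) = st_ret a.[i] K.
Proof. by simpl_step; rewrite lnth_enc. Qed.

Lemma step_comp f gs A K : step (st_eval (prf_code (PComp f gs)) A K) =
  comp_next (prf_code f) (enc_seq (rev (map prf_code gs))) A 0 K.
Proof. by simpl_step. Qed.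

Lemma step_prim0 f g xs K :
  step (st_eval (prf_code (PPrim f g)) (enc_seq (0 :: xs)) K) =
  st_eval (prf_code f) (enc_seq xs) K.
Proof. by simpl_step. Qed.

Lemma step_primS f g n xs K :
  step (st_eval (prf_code (PPrim f g)) (enc_seq (n.+1 :: xs)) K) =
  st_eval (prf_code (PPrim f g)) (enc_seq (n :: xs))
          (lcons (fr_prim (prf_code g) n (enc_seq xs)) K).
Proof. by simpl_step. Qed.

Lemma step_mu f xs K :
  step (st_eval (prf_code (PMu f)) (enc_seq xs) K) =
  st_eval (prf_code f) (enc_seq (0 :: xs)) (lcons (fr_mu (prf_code f) (enc_seq xs) 0) K).
Proof. by simpl_step. Qed.

Lemma step_ret_comp y c L A acc K :
  step (st_ret y (lcons (fr_comp c L A acc) K)) = comp_next c L A (lcons y acc) K.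
Proof. by simpl_step. Qed.

Lemma step_ret_prim y c n X K :
  step (st_ret y (lcons (fr_prim c n X) K)) = st_eval c (lcons n (lcons y X)) K.
Proof. by simpl_step. Qed.

Lemma step_ret_mu y c X n K :
  step (st_ret y (lcons (fr_mu c X n) K)) =
  if y == 0 then st_ret n K else st_eval c (lcons n.+1 X) (lcons (fr_mu c X n.+1) K).
Proof. by simpl_step. Qed.

Lemma step_final y : step (st_ret y 0) = st_ret y 0.
Proof. by simpl_step. Qed.

Lemma comp_next_nil c A acc K : comp_next c (enc_seq [::]) A acc K = st_eval c acc K.
Proof. by []. Qed.

Lemma comp_next_cons c g L A acc K :
  comp_next c (enc_seq (g :: L)) A acc K = st_eval g A (lcons (fr_comp c (enc_seq L) A acc) K).
Proof. by rewrite /comp_next [enc_seq _]/= lcons_eq0 lhd_cons ltl_cons. Qed.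

Definition reach s s' := exists t, iter t step s = s'.

Lemma reach_refl s : reach s s.
Proof. by exists 0. Qed.

Lemma reach_trans s1 s2 s3 : reach s1 s2 -> reach s2 s3 -> reach s1 s3.
Proof. by move=> [t1 <-] [t2 <-]; exists (t2 + t1); rewrite iterD. Qed.

Lemma reach_step s s' : reach (step s) s' -> reach s s'.
Proof. by move=> [t <-]; exists t.+1; rewrite iterSr. Qed.

Lemma reach_mu c xs n K :
  (forall m, m < n ->
     exists k, forall K', reach (st_eval c (enc_seq (m :: xs)) K') (st_ret k.+1 K')) ->
  (forall K', reach (st_eval c (enc_seq (n :: xs)) K') (st_ret 0 K')) ->
  reach (st_eval c (enc_seq (0 :: xs)) (lcons (fr_mu c (enc_seq xs) 0) K)) (st_ret n K).
Proof.
move=> below_n at_n.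
suff from_n_minus j : j <= n -> reach (st_eval c (enc_seq ((n - j) :: xs))
                                         (lcons (fr_mu c (enc_seq xs) (n - j)) K)) (st_ret n K).
  by have := from_n_minus n (leqnn n); rewrite subnn.
elim: j => [_ | j IH lt_jn].
- rewrite subn0; apply: reach_trans (at_n _) _.
  by apply: reach_step; rewrite step_ret_mu; apply: reach_refl.
- have lt_n : n - j.+1 < n by lia.
  have [k reach_k] := below_n _ lt_n.
  apply: reach_trans (reach_k _) _; apply: reach_step; rewrite step_ret_mu /=.
  have -> : (n - j.+1).+1 = n - j by lia.
  exact: IH (ltnW lt_jn).
Qed.

Lemma eval_reach f a y : eval f a y ->
  forall K, reach (st_eval (prf_code f) (enc_seq a) K) (st_ret y K)
with evals_reach gs a ys : evals gs a ys -> forall c L acc K,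
  reach (comp_next c (enc_seq (rev (map prf_code gs) ++ L)) (enc_seq a) (enc_seq acc) K)
        (comp_next c (enc_seq L) (enc_seq a) (enc_seq (ys ++ acc)) K).
Proof.
- case=> {f a y} [a|x a|i a|f gs a ys y Hgs Hf|f g xs y Hf|f g n xs r y Hr Hg|f xs n Hn Hlt] K;
    apply: reach_step.
  + by rewrite step_zero; apply: reach_refl.
  + by rewrite step_succ; apply: reach_refl.
  + by rewrite step_proj; apply: reach_refl.
  + have := evals_reach _ _ _ Hgs (prf_code f) [::] [::] K.
    rewrite step_comp !cats0 comp_next_nil => reach_args.
    exact (reach_trans reach_args (eval_reach _ _ _ Hf K)).
  + by rewrite step_prim0; exact (eval_reach _ _ _ Hf K).
  + rewrite step_primS; apply: reach_trans (eval_reach _ _ _ Hr _) _.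
    by apply: reach_step; rewrite step_ret_prim; exact (eval_reach _ _ _ Hg K).
  + rewrite step_mu; apply: reach_mu => [m lt_mn | K']; last exact (eval_reach _ _ _ Hn K').
    by case: (Hlt m lt_mn) => k Hk; exists k => K'; exact (eval_reach _ _ _ Hk K').
- case=> {gs a ys} [a|g gs a y ys Hg Hgs] c L acc K; first exact: reach_refl.
  rewrite /= rev_cons cat_rcons.
  apply: reach_trans (evals_reach _ _ _ Hgs c (prf_code g :: L) acc K) _.
  rewrite comp_next_cons; apply: reach_trans (eval_reach _ _ _ Hg _) _.
  by apply: reach_step; rewrite step_ret_comp; apply: reach_refl.
Qed.

Definition output s := fstn (sndn s).
Definition halted s := s == st_ret (output s) 0.

Arguments output : simpl never.
Arguments halted : simpl never.

Lemma output_ret y K : output (st_ret y K) = y.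
Proof. by rewrite /output /st_ret sndn_pair fstn_pair. Qed.

Lemma halted_ret y : halted (st_ret y 0).
Proof. by rewrite /halted output_ret. Qed.

Lemma iter_step_final t y : iter t step (st_ret y 0) = st_ret y 0.
Proof. by elim: t => //= t ->; apply: step_final. Qed.

Lemma first_final_state s t y : iter t step s = st_ret y 0 ->
  exists t0, iter t0 step s = st_ret y 0 /\ forall m, m < t0 -> ~~ halted (iter m step s).
Proof.
move=> final_t.
have ex_halted : exists t, halted (iter t step s) by exists t; rewrite final_t halted_ret.
case: (ex_minnP ex_halted) => t0 /eqP halted_t0 min_t0.
exists t0; split=> [|m lt_m]; last by apply/negP=> /min_t0; lia.
have le_t0t : t0 <= t by apply: min_t0; rewrite final_t halted_ret.
by move: final_t; rewrite -(subnK le_t0t) iterD halted_t0 iter_step_final.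
Qed.

Definition outputR := @extR (fstR (sndR 'a_0)) (fun a => output a.[0]) (fun=> erefl).

Definition stateR := iterR stepR $ [:: 'a_0; st_evalR $ [:: 'a_1; 'a_2; zeroR]].

Definition haltR :=
  @extR (ifeqR $ [:: stateR; st_retR $ [:: outputR $ [:: stateR]; zeroR]; zeroR; constR 1])
        (fun a => if halted (iter a.[0] step (st_eval a.[1] a.[2] 0)) then 0 else 1)
        (fun=> erefl).

Definition resultR :=
  @extR (outputR $ [:: stateR]) (fun a => output (iter a.[0] step (st_eval a.[1] a.[2] 0)))
        (fun=> erefl).

Definition universal := PComp (rprog resultR) [:: PMu (rprog haltR); PProj 0; PProj 1].

Lemma eval_universal f a y : eval f a y -> eval universal [:: prf_code f; enc_seq a] y.
Proof.
move=> /eval_reach /(_ 0) [t /first_final_state [t0 [final_t0 running]]].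
set args := [:: prf_code f; enc_seq a].
apply: (@ev_comp _ _ _ (t0 :: args)); last first.
  by have := rprogP resultR (t0 :: args); rewrite /= final_t0 output_ret.
apply: evs_cons; last by do !constructor.
apply: ev_mu => [|m lt_m].
  by have := rprogP haltR (t0 :: args); rewrite /= final_t0 halted_ret.
by exists 0; have := rprogP haltR (m :: args); rewrite /= (negbTE (running _ lt_m)).
Qed.

(** * An optimal [U] with an infinite [E_U] *)

(* On codes of strings, [2] is the code of [[:: true]] and [odd] detects a leading
   [false] bit; see [flagR_code]. *)
Lemma flagR_subproof :
  ifeqR $ [:: subR $ [:: constR 1; oddR $ [:: 'a_1]]; ifeq 'a_2 2 (constR 1) zeroR;
              ifz (oddR $ [:: iterR ctailR $ [:: succR $ [:: 'a_0]; 'a_1]]) (constR 1) zeroR;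
              constR 1]
  =1 fun a => if (~~ odd a.[1] == (a.[2] == 2)) && odd (iter a.[0].+1 ctail a.[1]) then 0 else 1.
Proof. by move=> a /=; case: (odd a.[1]); case: (a.[2] == 2); case: (odd _). Qed.

Definition flagR := extR flagR_subproof.

Definition argsR :=
  @extR (lconsR $ [:: iterR ctailR $ [:: succR $ [:: succR $ [:: 'a_0]]; 'a_1];
                      lconsR $ [:: 'a_2; zeroR]])
        (fun a => enc_seq [:: iter a.[0].+2 ctail a.[1]; a.[2]]) (fun=> erefl).

Definition U_decode := PMu (rprog flagR).

Definition U := PComp universal [:: U_decode; PComp (rprog argsR) [:: U_decode; PProj 0; PProj 1]].

Definition U_prefix (V : prf) (x : bstr) :=
  (x == [:: true]) :: rcons (nseq (prf_code V) true) false.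

Lemma flagR_code k p x :
  flagR [:: k; code p; code x] =
  if (head true p == (x == [:: true])) && ~~ nth true p k.+1 then 0 else 1.
Proof.
rewrite /= -iterS iter_ctail_code !odd_code code_eq2 !negbK.
by rewrite -[head _ (drop _ _)]nth0 nth_drop addn0.
Qed.

Lemma eval_U_decode V x p : eval U_decode [:: code (U_prefix V x ++ p); code x] (prf_code V).
Proof.
have bit_prefix m : m <= prf_code V -> nth true (U_prefix V x ++ p) m.+1 = (m != prf_code V).
  move=> le_m; rewrite /= nth_cat size_rcons size_nseq ltnS le_m nth_rcons size_nseq.
  by rewrite nth_nseq; case: ltngtP le_m.
apply: ev_mu => [|m lt_m].
  have := rprogP flagR [:: prf_code V; code (U_prefix V x ++ p); code x].
  by rewrite flagR_code bit_prefix //= !eqxx.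
exists 0; have := rprogP flagR [:: m; code (U_prefix V x ++ p); code x].
by rewrite flagR_code bit_prefix ?(ltnW lt_m) // (ltn_eqF lt_m) andbF.
Qed.

Lemma size_U_prefix V x : size (U_prefix V x) = (prf_code V).+2.
Proof. by rewrite /= size_rcons size_nseq. Qed.

Lemma argsR_prefix V x p :
  argsR [:: prf_code V; code (U_prefix V x ++ p); code x] = enc_seq [:: code p; code x].
Proof.
have := iter_ctail_code (prf_code V).+2 (U_prefix V x ++ p).
by rewrite drop_size_cat ?size_U_prefix => // <-.
Qed.

Lemma U_invariance V p x y : app2 V p x y -> app2 U (U_prefix V x ++ p) x y.
Proof.
move=> /eval_universal eval_V; rewrite /app2 /U; apply: ev_comp _ eval_V.
have decode := eval_U_decode V x p.
apply: (evs_cons decode); apply: evs_cons (evs_nil _).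
rewrite -(argsR_prefix V).
apply: (@ev_comp _ _ _ [:: prf_code V; code (U_prefix V x ++ p); code x]); last exact: rprogP.
by apply: (evs_cons decode); do !constructor.
Qed.

Lemma U_flag p x y : app2 U p x y -> head true p = (x == [:: true]).
Proof.
case/eval_comp_inv=> ys /evals_cons_inv [k [ys' [_ /eval_mu_inv [flag0 _] _]]] _.
move: (eval_functional (rprogP flagR _) flag0); rewrite flagR_code.
by case: eqP => //= ->.
Qed.

Theorem proposition1 :
  exists U : prf,
    (forall V : prf, exists c : nat,
       forall x y : seq bool, leinf (KS U y x) (addinf (KS V y x) c)) /\
    (exists x y : seq bool, E U x y = None).
Proof.
exists U; split.
- move=> V; exists (prf_code V).+2 => x y.
  apply: (@min_len_translate _ _ (cat (U_prefix V x))) => [p | p].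
    exact: U_invariance.
  by rewrite size_cat size_U_prefix addnC.
- exists [::], [:: true]; apply: min_len_none => p [/U_flag + /U_flag].
  by move=> ->.
Qed.
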